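(* Let $p_1,\dots,p_n$ be distinct primes with $p_i\equiv 5\pmod 8$ for all $i$, let $D=p_1\cdots p_n$, and let \[\mathcal{G}=\{a\in\mathbb{Z}: 1\leq a\leq D,\ \left(\tfrac{p_i}{a}\right)=1\text{ for all }1\leq i\leq n\}.\] Then $\mathfrak{s}_1=\sum_{a\in\mathcal{G}}a^2$ satisfies $\mathfrak{s}_1\equiv 2^{n-1}\mathfrak{t}\pmod 4$ for some odd integer $\mathfrak{t}$. In particular, if $n\geq 3$ then $4\mid\mathfrak{s}_1$.
   Context: $\left(\frac{p}{a}\right)$ denotes the Kronecker–Jacobi symbol. *)

From HB Require Import structures.
From mathcomp Require Import all_boot all_order all_algebra.
Set Implicit Arguments. Unset Strict Implicit. Unset Printing Implicit Defensive.
Import Order.TTheory GRing.Theory Num.Theory.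

Definition legendre (a q : nat) : int :=
  if q %| a then 0%R
  else if [exists x : 'I_q, (x * x == a %[mod q])%N] then 1%R else (-1)%R.

Definition kron_prime (a q : nat) : int :=
  if q == 2 then
    (if ~~ odd a then 0%R
     else if (a %% 8 == 1) || (a %% 8 == 7) then 1%R else (-1)%R)
  else legendre a q.

Definition kronecker (a m : nat) : int :=
  (\prod_(q <- primes m) kron_prime a q ^+ logn q m)%R.

From mathcomp Require Import all_boot all_order all_algebra zify.
Import GRing.Theory Num.Theory.
Set Implicit Arguments. Unset Strict Implicit.

(* For a > 0 and p = 1 (mod 4), quadratic reciprocity and its supplement for 2 turn the
   Kronecker condition (p_i/a) = 1 into the Legendre condition (a/p_i) = 1, so G is the set
   of common quadratic residues in [1, D].  Since a^2 = [a odd] (mod 4), s1 is congruent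
   mod 4 to the number of odd elements of G.  As -1 is a square modulo every p_i, G is
   stable under a |-> D - a, which swaps parities because D is odd; so half of G is odd.
   By the Chinese remainder theorem #|G| = prod_i (p_i - 1)/2, and each (p_i - 1)/2 is
   twice an odd number because p_i = 5 (mod 8). *)

Lemma sum_nat_leq (n c : nat) : c <= n -> \sum_(1 <= j < n.+1) (j <= c) = c.
Proof.
move=> c_le_n; rewrite (@big_cat_nat _ _ _ c.+1) //=.
rewrite (eq_big_nat _ _ (F2 := fun=> 1)) => [|j]; last by lia.
rewrite [X in _ + X](eq_big_nat _ _ (F2 := fun=> 0)) => [|j]; last by lia.
by rewrite !sum_nat_const_nat; lia.
Qed.

Section PrimeField.
Variable p : nat.
Hypothesis p_pr : prime p.
Local Open Scope ring_scope.

Lemma Fp_nat_eq (a b : nat) : ((a%:R : 'F_p) == b%:R) = (a == b %[mod p])%N.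
Proof. by rewrite -val_eqE /= !val_Fp_nat. Qed.

Lemma Fp_nat_eq0 (a : nat) : ((a%:R : 'F_p) == 0) = (p %| a)%N.
Proof. by have := Fp_nat_eq a 0; rewrite mod0n. Qed.

Lemma Fp_fermat (a : nat) : ~~ (p %| a)%N -> (a%:R : 'F_p) ^+ p.-1 = 1.
Proof.
rewrite -Fp_nat_eq0 => a_neq0; apply: (mulIf a_neq0).
rewrite mul1r -exprSr prednK ?prime_gt0 //.
by rewrite -natrX; apply/eqP; rewrite Fp_nat_eq fermat_little.
Qed.

Lemma Fp_sqr_nat_inj (u v : nat) : (0 < u)%N -> (0 < v)%N -> (u + v < p)%N ->
  (u%:R : 'F_p) ^+ 2 = v%:R ^+ 2 -> u = v.
Proof.
move=> u_gt0 v_gt0 uv_lt_p /eqP; rewrite eqf_sqr => /orP[|].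
  by rewrite Fp_nat_eq !modn_small; [move/eqP | lia | lia].
by rewrite -addr_eq0 -natrD Fp_nat_eq0 => /dvdn_leq; lia.
Qed.

Lemma Fp_intr_sign_inj (x y : int) : (2 < p)%N ->
  x \in [:: 0; 1; -1] -> y \in [:: 0; 1; -1] -> (x%:~R : 'F_p) = y%:~R -> x = y.
Proof.
move=> p_gt2 x_sign y_sign.
have one_neq0 : (1 : 'F_p) != 0 := oner_neq0 _.
have one_neqN1 : (1 : 'F_p) != -1.
  by rewrite -subr_eq0 opprK -(natrD _ 1 1) Fp_nat_eq0; apply/negP => /dvdn_leq; lia.
have N1_neq0 : (-1 : 'F_p) != 0 by rewrite oppr_eq0.
move: x_sign y_sign; rewrite !inE.
case/or3P => /eqP->; case/or3P => /eqP-> //=;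
  rewrite ?mulr0z ?mulr1z ?mulrN1z => E.
- by move: N1_neq0; rewrite -E eqxx.
- by move: one_neqN1; rewrite {1}E eqxx.
- by move: N1_neq0; rewrite E eqxx.
- by move: one_neqN1; rewrite E eqxx.
Qed.

End PrimeField.

Section Legendre.
Variable p : nat.
Hypotheses (p_pr : prime p) (p_odd : odd p).
Local Notation h := (p.-1)./2.
Local Open Scope ring_scope.

Let p_gt2 : (2 < p)%N. Proof. exact: odd_prime_gt2. Qed.
Let half_double : (h * 2)%N = p.-1. Proof. lia. Qed.
Let h_gt0 : (0 < h)%N. Proof. lia. Qed.

Lemma legendre_sign_range (a : nat) : legendre a p \in [:: 0; 1; -1].
Proof. by rewrite /legendre; case: ifP => _ //; case: ifP. Qed.

Lemma Fp_pow_half_eq1 (y : 'F_p) :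
  y ^+ h = 1 -> exists2 k, (0 < k <= h)%N & y = k%:R ^+ 2.
Proof.
move=> yh; have [/hasP[k]|/hasPn y_nsqr] := boolP (has (fun k => y == k%:R ^+ 2) (iota 1 h)).
  by rewrite mem_iota => k_range /eqP->; exists k => //; lia.
(* otherwise [y] and the [h] distinct squares [k^2] would be [h + 1] roots of ['X^h - 1] *)
pose roots := y :: [seq (k%:R : 'F_p) ^+ 2 | k <- iota 1 h].
have roots_ok : all (root ('X^h - 1%:P)) roots.
  rewrite /= rootE !hornerE yh subrr eqxx /=.
  apply/allP => z /mapP[k]; rewrite mem_iota => k_range ->.
  rewrite rootE !hornerE -exprM mulnC half_double Fp_fermat ?subrr //.
  by apply/negP => /dvdn_leq; lia.
have roots_uniq : uniq roots.
  rewrite /= map_inj_in_uniq ?iota_uniq ?andbT.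
    by apply/mapP => -[k k_range y_k]; move: (y_nsqr k k_range); rewrite y_k eqxx.
  move=> u v; rewrite !mem_iota => u_range v_range; apply: Fp_sqr_nat_inj => //; lia.
have X_neq0 : ('X^h - 1%:P : {poly 'F_p}) != 0 by rewrite -size_poly_eq0 size_XnsubC.
have := max_poly_roots X_neq0 roots_ok roots_uniq.
by rewrite size_XnsubC // /= size_map size_iota ltnn.
Qed.

Lemma Euler_criterion (a : nat) : (legendre a p)%:~R = (a%:R : 'F_p) ^+ h.
Proof.
rewrite /legendre; case: ifPn => [pa | p_ndvd_a].
  by move: pa; rewrite -Fp_nat_eq0 // => /eqP->; rewrite expr0n gtn_eqF.
case: ifP => [/existsP[x /eqP xx_a] | a_nsqr].
  have p_ndvd_x : ~~ (p %| x)%N.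
    apply: contra p_ndvd_a => /dvdnP[k x_kp].
    by rewrite /dvdn -xx_a x_kp mulnA modnMl.
  have -> : (a%:R : 'F_p) = x%:R ^+ 2 by apply/eqP; rewrite -natrX Fp_nat_eq // -xx_a mulnn.
  by rewrite -exprM mulnC half_double Fp_fermat.
have : ((a%:R : 'F_p) ^+ h) ^+ 2 = 1 by rewrite -exprM half_double Fp_fermat.
move/eqP; rewrite sqrf_eq1 => /orP[/eqP/Fp_pow_half_eq1[k k_range a_k] | /eqP-> //].
have k_lt_p : (k < p)%N by lia.
move/negbT/existsPn: a_nsqr => /(_ (Ordinal k_lt_p)) /=.
by rewrite -Fp_nat_eq // natrM -expr2 -a_k eqxx.
Qed.

Lemma legendre_eq_Euler (a : nat) (x : int) : x \in [:: 0; 1; -1] ->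
  (a%:R : 'F_p) ^+ h = x%:~R -> legendre a p = x.
Proof.
move=> x_sign a_h; apply: (Fp_intr_sign_inj p_pr p_gt2 (legendre_sign_range a) x_sign).
by rewrite Euler_criterion.
Qed.

Lemma legendreM (a b : nat) : legendre (a * b) p = legendre a p * legendre b p.
Proof.
apply: legendre_eq_Euler; last by rewrite intrM !Euler_criterion natrM exprMn.
move: (legendre_sign_range a) (legendre_sign_range b); rewrite !inE.
by case/or3P => /eqP->; case/or3P => /eqP->.
Qed.

Lemma legendre1 : legendre 1 p = 1.
Proof. by apply: legendre_eq_Euler; rewrite ?expr1n. Qed.

Lemma legendreX (a e : nat) : legendre (a ^ e) p = legendre a p ^+ e.
Proof. by elim: e => [|e IH]; rewrite ?legendre1 // expnS legendreM IH exprS. Qed.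

Lemma legendre_mod (a : nat) : legendre (a %% p) p = legendre a p.
Proof.
by apply: legendre_eq_Euler; rewrite ?legendre_sign_range // Fp_nat_mod // Euler_criterion.
Qed.

Lemma legendre_reflect (D a : nat) : (p %% 4 = 1)%N -> (p %| D)%N -> (a <= D)%N ->
  legendre (D - a) p = legendre a p.
Proof.
move=> p_mod4 p_dvd_D a_le_D.
apply: legendre_eq_Euler; rewrite ?legendre_sign_range // Euler_criterion natrB //.
have -> : (D%:R : 'F_p) = 0 by apply/eqP; rewrite Fp_nat_eq0.
by rewrite sub0r exprNn -signr_odd (_ : odd h = false) ?mul1r //; lia.
Qed.

End Legendre.

Section GaussLemma.
Variable p : nat.
Hypotheses (p_pr : prime p) (p_odd : odd p).
Local Notation h := (p.-1)./2.

Let p_gt2 : 2 < p. Proof. exact: odd_prime_gt2. Qed.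
Let half_double : h * 2 = p.-1. Proof. lia. Qed.

(* The representative of [k a] in [-h, h] is [(-1)^[h < k a %% p] * half_residue a k]. *)
Definition half_residue (a k : nat) : nat :=
  if k * a %% p <= h then k * a %% p else p - k * a %% p.

Definition gauss_count (a : nat) : nat := \sum_(1 <= k < h.+1) (h < k * a %% p).

Definition eisenstein_sum (a : nat) : nat := \sum_(1 <= k < h.+1) k * a %/ p.

Lemma Fp_half_residue (a k : nat) :
  (((k * a)%:R : 'F_p) = (-1) ^+ (h < k * a %% p)%N * (half_residue a k)%:R)%R.
Proof.
rewrite -(Fp_nat_mod p_pr) /half_residue; case: leqP => _; first by rewrite mul1r.
have r_le_p : k * a %% p <= p by rewrite ltnW // ltn_mod prime_gt0.
by rewrite expr1 natrB // pchar_Fp_0 // sub0r mulN1r opprK.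
Qed.

Lemma half_residue_range (a k : nat) : ~~ (p %| a) -> 0 < k <= h ->
  0 < half_residue a k <= h.
Proof.
move=> p_ndvd_a k_range.
have r_neq0 : k * a %% p != 0.
  apply: contra p_ndvd_a => /eqP r_eq0.
  have : p %| k * a by rewrite /dvdn r_eq0.
  by rewrite Euclid_dvdM // => /orP[/dvdn_leq|//]; lia.
have r_lt_p : k * a %% p < p by rewrite ltn_mod prime_gt0.
by rewrite /half_residue; case: (leqP (k * a %% p) h); lia.
Qed.

Lemma perm_half_residues (a : nat) : ~~ (p %| a) ->
  perm_eq [seq half_residue a k | k <- index_iota 1 h.+1] (index_iota 1 h.+1).
Proof.
move=> p_ndvd_a.
have sqr_half_residue k :
    ((half_residue a k)%:R ^+ 2 = (k%:R * a%:R) ^+ 2 :> 'F_p)%R.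
  by rewrite -natrM Fp_half_residue exprMn sqrr_sign mul1r.
have a_neq0 : ((a%:R : 'F_p) ^+ 2 != 0)%R by rewrite expf_neq0 // Fp_nat_eq0.
have hr_uniq : uniq [seq half_residue a k | k <- index_iota 1 h.+1].
  rewrite map_inj_in_uniq ?iota_uniq // => u v.
  rewrite !mem_index_iota => u_range v_range hr_uv.
  apply: (Fp_sqr_nat_inj p_pr); try lia.
  by apply: (mulIf a_neq0); rewrite -!exprMn -!sqr_half_residue hr_uv.
have hr_sub : {subset [seq half_residue a k | k <- index_iota 1 h.+1] <= index_iota 1 h.+1}.
  move=> r /mapP[k]; rewrite !mem_index_iota => k_range ->.
  have := half_residue_range p_ndvd_a (_ : 0 < k <= h); lia.
apply: uniq_perm => //; first exact: iota_uniq.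
by apply: (uniq_min_size hr_uniq hr_sub _).2; rewrite size_map.
Qed.

Lemma Gauss_lemma (a : nat) : ~~ (p %| a) -> legendre a p = ((-1) ^+ gauss_count a)%R.
Proof.
move=> p_ndvd_a; apply: legendre_eq_Euler => //; first by rewrite -signr_odd; case: odd.
pose fact_h := (\prod_(1 <= k < h.+1) (k%:R : 'F_p))%R.
have fact_h_neq0 : fact_h != 0%R.
  rewrite prodf_seq_neq0; apply/allP => k; rewrite mem_index_iota => k_range /=.
  by rewrite Fp_nat_eq0 //; apply/negP => /dvdn_leq; lia.
have prod_ka : (\prod_(1 <= k < h.+1) ((k * a)%:R : 'F_p) = fact_h * a%:R ^+ h)%R.
  under eq_bigr do rewrite natrM.
  by rewrite big_split /= prodr_const_nat subn1.
have prod_ka_residues :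
    (\prod_(1 <= k < h.+1) ((k * a)%:R : 'F_p) = (-1) ^+ gauss_count a * fact_h)%R.
  under eq_bigr do rewrite Fp_half_residue.
  rewrite big_split /= prodrXr -(big_map (half_residue a) xpredT (fun k => (k%:R : 'F_p)%R)).
  by rewrite (perm_big _ (perm_half_residues p_ndvd_a)).
by apply: (mulfI fact_h_neq0); rewrite -prod_ka prod_ka_residues mulrC intr_sign.
Qed.

Lemma gauss_count_parity (a : nat) : odd a -> ~~ (p %| a) ->
  odd (gauss_count a) = odd (eisenstein_sum a).
Proof.
move=> a_odd p_ndvd_a.
(* sum the division identities [k a = p (k a %/ p) + k a %% p] and reduce mod 2 *)
have division k : k * a + (h < k * a %% p) * half_residue a k * 2 =
    p * (k * a %/ p) + half_residue a k + (h < k * a %% p) * p.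
  rewrite /half_residue; have := divn_eq (k * a) p; have := ltn_mod (k * a) p.
  by rewrite prime_gt0 //; case: (leqP (k * a %% p) h); lia.
have sums : \sum_(1 <= k < h.+1) (k * a + (h < k * a %% p) * half_residue a k * 2) =
    \sum_(1 <= k < h.+1) (p * (k * a %/ p) + half_residue a k + (h < k * a %% p) * p).
  by apply: eq_bigr => k _; exact: division.
rewrite !big_split -!big_distrr -!big_distrl in sums.
rewrite -(big_map (half_residue a) xpredT id) in sums.
rewrite (perm_big _ (perm_half_residues p_ndvd_a)) in sums.
move/(congr1 odd): sums; rewrite !oddD !oddM a_odd p_odd /= andbF !andbT addbF.
by rewrite /gauss_count /eisenstein_sum; do 3!case: (odd _).
Qed.

Lemma legendre2 : legendre 2 p = ((-1) ^+ (h - h./2))%R.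
Proof.
rewrite Gauss_lemma; last by apply/negP => /dvdn_leq; lia.
congr (_ ^+ _)%R; rewrite /gauss_count.
have : \sum_(1 <= k < h.+1) (h < k * 2 %% p) + \sum_(1 <= k < h.+1) (k <= h./2) = h.
  rewrite -big_split (eq_big_nat _ _ (F2 := fun=> 1)) => [|k k_range].
    by rewrite sum_nat_const_nat; lia.
  by rewrite /= modn_small; lia.
by rewrite sum_nat_leq; lia.
Qed.

Lemma count_quadratic_residues : \sum_(x < p) (legendre x p == 1%R) = h.
Proof.
pose squares := [seq k * k %% p | k <- iota 1 h].
have squares_uniq : uniq squares.
  rewrite map_inj_in_uniq ?iota_uniq // => u v; rewrite !mem_iota => u_range v_range uv.
  apply: (Fp_sqr_nat_inj p_pr); try lia.
  by apply/eqP; rewrite -!natrX Fp_nat_eq // -!mulnn uv.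
have residues_squares : [seq x <- index_iota 0 p | legendre x p == 1%R] =i squares.
  move=> x; rewrite mem_filter mem_index_iota /=.
  apply/andP/mapP => [[x_res x_lt_p] | [k]].
    move: x_res; rewrite /legendre; case: ifP => // p_ndvd_x.
    case: ifP => [/existsP[y /eqP yy_x] _ | //].
    have y_lt_p := ltn_ord y.
    have y_gt0 : 0 < y.
      by move: p_ndvd_x; rewrite /dvdn -yy_x; case: (nat_of_ord y) => [|//]; rewrite mul0n mod0n.
    case: (leqP y h) => y_h.
      by exists (nat_of_ord y); [rewrite mem_iota; lia | rewrite yy_x modn_small].
    exists (p - y); first by rewrite mem_iota; lia.
    rewrite -(modn_small x_lt_p) -yy_x; apply/eqP; rewrite -Fp_nat_eq //.
    by rewrite !natrM natrB ?(ltnW y_lt_p) // pchar_Fp_0 // sub0r mulrNN.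
  rewrite mem_iota => k_range ->; split; last by rewrite ltn_mod prime_gt0.
  apply/eqP/legendre_eq_Euler => //.
  rewrite Fp_nat_mod // natrM -expr2 -exprM mulnC half_double Fp_fermat //.
  by apply/negP => /dvdn_leq; lia.
have -> : \sum_(x < p) (legendre x p == 1%R) =
    count (fun x => legendre x p == 1%R) (index_iota 0 p).
  by rewrite -sum1_count [RHS]big_mkcond big_mkord.
rewrite -size_filter (perm_size (uniq_perm _ squares_uniq residues_squares)).
  by rewrite size_map size_iota.
by rewrite filter_uniq ?iota_uniq.
Qed.

End GaussLemma.

Lemma mul_primes_neq (p q j k : nat) : prime p -> prime q -> p != q -> 0 < k < p ->
  j * p != k * q.
Proof.
move=> p_pr q_pr p_neq_q k_range; apply/negP => /eqP jp_kq.
have : p %| k * q by rewrite -jp_kq dvdn_mull.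
by rewrite Euclid_dvdM // (dvdn_prime2 p_pr q_pr) (negbTE p_neq_q) orbF => /dvdn_leq; lia.
Qed.

Lemma eisenstein_term_count (p q k : nat) : prime p -> prime q -> odd p -> odd q ->
  p != q -> 0 < k <= (p.-1)./2 ->
  k * q %/ p = \sum_(1 <= j < ((q.-1)./2).+1) (j * p < k * q).
Proof.
move=> p_pr q_pr p_odd q_odd p_neq_q k_range; have p_gt0 := prime_gt0 p_pr.
rewrite -[LHS](@sum_nat_leq ((q.-1)./2)).
  apply: eq_big_nat => j j_range; rewrite leq_divRL // ltn_neqAle mul_primes_neq //; lia.
by rewrite -ltnS ltn_divLR //; nia.
Qed.

Lemma eisenstein_sum_sym (p q : nat) : prime p -> prime q -> odd p -> odd q -> p != q ->
  eisenstein_sum p q + eisenstein_sum q p = (p.-1)./2 * (q.-1)./2.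
Proof.
move=> p_pr q_pr p_odd q_odd p_neq_q; have q_neq_p : q != p by rewrite eq_sym.
rewrite /eisenstein_sum.
rewrite (eq_big_nat _ _ (F2 := fun k => \sum_(1 <= j < ((q.-1)./2).+1) (j * p < k * q)))
  => [|k k_range]; last by rewrite eisenstein_term_count //; lia.
rewrite [X in _ + X](eq_big_nat _ _
    (F2 := fun k => \sum_(1 <= j < ((p.-1)./2).+1) (j * q < k * p)))
  => [|k k_range]; last by rewrite eisenstein_term_count //; lia.
rewrite [X in _ + X]exchange_big -big_split /=.
rewrite (eq_big_nat _ _ (F2 := fun=> (q.-1)./2)) => [|k k_range].
  by rewrite sum_nat_const_nat subn1.
rewrite -big_split (eq_big_nat _ _ (F2 := fun=> 1)) => [|j j_range].
  by rewrite sum_nat_const_nat; lia.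
by have := mul_primes_neq j p_pr q_pr p_neq_q (_ : 0 < k < p); rewrite /=; lia.
Qed.

Theorem quadratic_reciprocity (p q : nat) : prime p -> prime q -> odd p -> odd q ->
  p != q -> (legendre p q * legendre q p = (-1) ^+ ((p.-1)./2 * (q.-1)./2))%R.
Proof.
move=> p_pr q_pr p_odd q_odd p_neq_q; have q_neq_p : q != p by rewrite eq_sym.
rewrite Gauss_lemma ?(dvdn_prime2 q_pr p_pr) // Gauss_lemma ?(dvdn_prime2 p_pr q_pr) //.
rewrite -exprD -[LHS]signr_odd -[RHS]signr_odd oddD.
rewrite !gauss_count_parity ?(dvdn_prime2 q_pr p_pr) ?(dvdn_prime2 p_pr q_pr) //.
by rewrite -oddD addnC eisenstein_sum_sym // signr_odd.
Qed.

Lemma legendre_reciprocity_1mod4 (p q : nat) : prime p -> prime q -> odd q ->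
  p %% 4 = 1 -> legendre p q = legendre q p.
Proof.
move=> p_pr q_pr q_odd p_mod4; have p_odd : odd p by lia.
have [<- // | p_neq_q] := eqVneq p q.
have := quadratic_reciprocity p_pr q_pr p_odd q_odd p_neq_q.
have -> : ((-1) ^+ ((p.-1)./2 * (q.-1)./2) = 1 :> int)%R.
  by rewrite -signr_odd oddM (_ : odd (p.-1)./2 = false) //; lia.
rewrite [legendre p q]Gauss_lemma ?(dvdn_prime2 q_pr p_pr) 1?eq_sym //.
by move/(congr1 (GRing.mul ((-1) ^+ gauss_count q p)%R)); rewrite mulr1 signrMK => <-.
Qed.

Lemma kron_prime_legendre (p q : nat) : prime p -> p %% 4 = 1 -> prime q ->
  kron_prime p q = legendre q p.
Proof.
move=> p_pr p_mod4 q_pr; have p_odd : odd p by lia.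
rewrite /kron_prime; case: eqP => [-> | q_neq2].
  rewrite legendre2 // p_odd /= -signr_odd.
  have [p_mod8 | p_mod8] : p %% 8 = 1 \/ p %% 8 = 5 by lia.
    by rewrite p_mod8 (_ : odd _ = false) //; lia.
  by rewrite p_mod8 (_ : odd _ = true) //; lia.
have q_odd : odd q by case: (even_prime q_pr) q_neq2.
exact: legendre_reciprocity_1mod4.
Qed.

Lemma kronecker_legendre (p a : nat) : prime p -> p %% 4 = 1 -> 0 < a ->
  kronecker p a = legendre a p.
Proof.
move=> p_pr p_mod4 a_gt0; have p_odd : odd p by lia.
rewrite /kronecker [in RHS](prod_prime_decomp a_gt0) prime_decompE big_map /=.
rewrite (big_morph (legendre^~ p) (legendreM p_pr p_odd) (legendre1 p_pr p_odd)).
apply: eq_big_seq => q; rewrite mem_primes => /andP[q_pr _].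
by rewrite legendreX // kron_prime_legendre.
Qed.

Lemma odd_prod_seq (r : seq nat) (F : nat -> nat) :
  {in r, forall m, odd (F m)} -> odd (\prod_(m <- r) F m).
Proof.
move=> F_odd; rewrite big_seq; apply: (big_ind odd) => [//|x y x_odd y_odd|m /F_odd//].
by rewrite oddM x_odd y_odd.
Qed.

Lemma sum_chinese (m M : nat) (P Q : pred nat) : 0 < m -> 0 < M -> coprime m M ->
  \sum_(a < m * M) (P (a %% m) && Q (a %% M)) = (\sum_(x < m) P x) * (\sum_(y < M) Q y).
Proof.
move=> m_gt0 M_gt0 co_mM.
pose f (a : 'I_(m * M)) : 'I_m * 'I_M := (Ordinal (ltn_pmod a m_gt0), Ordinal (ltn_pmod a M_gt0)).
have f_inj : injective f.
  move=> a b [] ab_m ab_M; apply: val_inj => /=.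
  have : a == b %[mod m * M] by rewrite chinese_remainder // ab_m ab_M !eqxx.
  by rewrite !modn_small // => /eqP.
have f_bij : bijective f by apply: inj_card_bij => //; rewrite card_prod !card_ord.
rewrite big_distrl /=; under [RHS]eq_bigr => x _ do rewrite big_distrr /=.
rewrite pair_big /= (reindex f (onW_bij _ f_bij)) /=.
by apply: eq_bigr => a _; rewrite -mulnb.
Qed.

Lemma sum_chinese_primes (ms : seq nat) (Q : nat -> pred nat) : all prime ms -> uniq ms ->
  \sum_(a < \prod_(m <- ms) m) all (fun m => Q m (a %% m)) ms =
  \prod_(m <- ms) \sum_(x < m) Q m x.
Proof.
elim: ms => [|m ms IH] /=; first by rewrite !big_nil big_ord1.
case/andP => m_pr ms_pr /andP[m_nin ms_uniq].
have ms_gt0 : 0 < \prod_(j <- ms) j.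
  by rewrite big_seq prodn_cond_gt0 // => j /(allP ms_pr)/prime_gt0.
have m_co_ms : coprime m (\prod_(j <- ms) j).
  rewrite big_seq; apply: (big_ind (coprime m)) => [|x y|j j_ms]; first exact: coprimen1.
    by rewrite coprimeMr => -> ->.
  rewrite prime_coprime // (dvdn_prime2 m_pr (allP ms_pr j j_ms)).
  by apply: contraNneq m_nin => ->.
rewrite !big_cons -IH //.
rewrite -(@sum_chinese m _ (Q m) (fun y => all (fun j => Q j (y %% j)) ms)) ?(prime_gt0 m_pr) //.
apply: eq_bigr => a _; congr (_ && _); apply: eq_in_all => j j_ms /=.
by rewrite modn_dvdm // (big_rem j j_ms) dvdn_mulr.
Qed.

Lemma count_residues_prod (ms : seq nat) : all prime ms -> all odd ms -> uniq ms ->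
  \sum_(a < \prod_(m <- ms) m) all (fun m => legendre a m == 1%R) ms =
  \prod_(m <- ms) (m.-1)./2.
Proof.
move=> ms_pr ms_odd ms_uniq.
rewrite -(eq_big_seq _ (fun m m_ms =>
  count_quadratic_residues (allP ms_pr m m_ms) (allP ms_odd m m_ms))).
rewrite -(sum_chinese_primes (fun m x => legendre x m == 1%R)) //.
apply: eq_bigr => a _; congr (nat_of_bool _); apply: eq_in_all => m m_ms /=.
by rewrite legendre_mod ?(allP ms_pr) ?(allP ms_odd).
Qed.

Lemma sum_odd_reflect (D : nat) (P : pred nat) : odd D ->
  (forall a, a <= D -> P (D - a) = P a) ->
  (\sum_(0 <= a < D.+1 | P a) odd a).*2 = \sum_(0 <= a < D.+1 | P a) 1.
Proof.
move=> D_odd P_sym.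
have odd_even : \sum_(0 <= a < D.+1 | P a) odd a = \sum_(0 <= a < D.+1 | P a) ~~ odd a.
  rewrite big_nat_rev.
  apply: congr_big_nat => [//|//|a a_le_D|a /and3P[_ _ a_le_D]]; rewrite add0n subSS.
    exact: P_sym.
  by rewrite oddB // D_odd.
by rewrite -addnn {2}odd_even -big_split; apply: eq_bigr => a _; case: odd.
Qed.

Lemma sum_sqr_mod4 (r : seq nat) (P : pred nat) :
  \sum_(a <- r | P a) a ^ 2 = \sum_(a <- r | P a) odd a %[mod 4].
Proof. by rewrite -modn_summ -[RHS]modn_summ; congr (_ %% 4); apply: eq_bigr => a _; lia. Qed.

Lemma double_sum_odd_residues (ms : seq nat) : all prime ms -> uniq ms -> ms != [::] ->
  (forall m, m \in ms -> m %% 4 = 1) ->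
  (\sum_(0 <= a < (\prod_(m <- ms) m).+1 | all (fun m => legendre a m == 1%R) ms) odd a).*2 =
  \prod_(m <- ms) (m.-1)./2.
Proof.
move=> ms_pr ms_uniq ms_nil ms_mod4.
have /hasP[m0 m0_ms _] : has predT ms by rewrite has_predT lt0n size_eq0.
have ms_odd : all odd ms by apply/allP => m /ms_mod4; lia.
set D := \prod_(m <- ms) m.
have m_dvd_D m : m \in ms -> m %| D by move=> m_ms; rewrite /D (big_rem m m_ms) dvdn_mulr.
have D_odd : odd D by apply: odd_prod_seq => m /(allP ms_odd).
rewrite sum_odd_reflect //; last first.
  move=> a a_le_D; apply: eq_in_all => m m_ms /=.
  by rewrite legendre_reflect ?(allP ms_pr) ?(allP ms_odd) ?m_dvd_D ?ms_mod4.
rewrite big_mkcond big_nat_recr //= ifN; last first.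
  by apply/allPn; exists m0 => //=; rewrite /legendre m_dvd_D.
by rewrite addn0 -count_residues_prod // big_mkord.
Qed.

Lemma sum_odd_residues_5mod8 (ms : seq nat) : all prime ms -> uniq ms -> ms != [::] ->
  (forall m, m \in ms -> m %% 8 = 5) ->
  exists2 t, odd t &
    \sum_(0 <= a < (\prod_(m <- ms) m).+1 | all (fun m => legendre a m == 1%R) ms) odd a =
    2 ^ (size ms).-1 * t.
Proof.
move=> ms_pr ms_uniq ms_nil ms_mod8.
exists (\prod_(m <- ms) ((m.-1)./2)./2); first by apply: odd_prod_seq => m /ms_mod8; lia.
apply: double_inj; rewrite double_sum_odd_residues // => [|m /ms_mod8]; last by lia.
rewrite (eq_big_seq (fun m => 2 * ((m.-1)./2)./2)) => [|m /ms_mod8]; last by lia.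
rewrite big_split /= big_const_seq count_predT iter_muln muln1.
by rewrite -mul2n mulnA -expnS prednK // lt0n size_eq0.
Qed.

Lemma kronecker_residues (I : finType) (p : I -> nat) (a : nat) :
  (forall i, prime (p i)) -> (forall i, p i %% 4 = 1) -> 0 < a ->
  [forall i, kronecker (p i) a == 1%R] =
  all (fun m => legendre a m == 1%R) [seq p i | i <- enum I].
Proof.
move=> p_pr p_mod4 a_gt0; rewrite all_map.
apply/forallP/allP => /= [kron_a i _ | leg_a i]; rewrite ?kronecker_legendre //.
by rewrite -kronecker_legendre.
by rewrite leg_a ?mem_enum.
Qed.

Unset Implicit Arguments.
Theorem lemma3p7 (n : nat) (p : 'I_n -> nat) :
  (0 < n)%N ->
  injective p ->
  (forall i, prime (p i)) ->
  (forall i, p i %% 8 = 5)%N ->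
  let D := (\prod_(i < n) p i)%N in
  let s1 : int :=
    (\sum_(1 <= a < D.+1 | [forall i, kronecker (p i) a == 1%R]) (a%:Z) ^+ 2)%R in
  (exists t : int, ~~ (2 %| t)%Z /\ (s1 = (2 ^+ (n - 1))%R * t %[mod 4])%Z)
  /\ ((3 <= n)%N -> (4 %| s1)%Z).
Proof.
move=> n_gt0 p_inj p_pr p_mod8 D s1.
have p_mod4 i : p i %% 4 = 1 by move: (p_mod8 i); lia.
pose ms := [seq p i | i <- enum 'I_n].
pose G a := all (fun m => legendre a m == 1%R) ms.
have s1_G : s1 = Posz (\sum_(0 <= a < D.+1 | G a) a ^ 2).
  rewrite big_ltn_cond // exp0n // add0n if_same -natz natr_sum.
  apply: congr_big_nat => // [a /andP[a_gt0 _] | a _]; first exact: kronecker_residues.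
  by rewrite natrX natz.
have ms_pr : all prime ms by apply/allP => _ /mapP[i _ ->].
have ms_uniq : uniq ms by rewrite map_inj_uniq // enum_uniq.
have ms_nil : ms != [::] by rewrite -size_eq0 size_map size_enum_ord -lt0n.
have ms_mod8 m : m \in ms -> m %% 8 = 5 by case/mapP => i _ ->.
have [t t_odd count_odd] := sum_odd_residues_5mod8 ms_pr ms_uniq ms_nil ms_mod8.
rewrite size_map size_enum_ord -subn1 big_map big_enum -/D in count_odd.
have pow2_int : (2 ^+ (n - 1) = (2 ^ (n - 1))%N :> int)%R by rewrite -natz natrX.
split.
  exists t; split; first by rewrite dvdzE /= dvdn2 t_odd.
  by rewrite s1_G pow2_int -PoszM !modz_nat sum_sqr_mod4 count_odd.
move=> n_ge3; rewrite s1_G dvdzE /= /dvdn sum_sqr_mod4 count_odd -/(dvdn 4 _).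
by rewrite dvdn_mulr // (@dvdn_exp2l 2 2); lia.
Qed.
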